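(* Let $F_0,\dots,F_{n+1}$ be complete oriented flags in $\mathbb{R}^n$. Then there exist $x_0,\dots,x_{n+1}\in\mathbb{R}^n$ such that $$\mathrm{Or}([F_0,\dots,\widehat{F_i},\dots,\widehat{F_j},\dots,F_{n+1}])=\mathrm{Or}(x_0,\dots,\widehat{x_i},\dots,\widehat{x_j},\dots,x_{n+1})$$ for every $0\le i<j\le n+1$.
   Context: A complete oriented flag $F$ is a chain $\{0\}=F^0\subset F^1\subset\dots\subset F^n=\mathbb{R}^n$ with $\dim F^i=i$, each $F^i$ equipped with a choice of open half-space $(F^i)^+$ of $F^i$ bounded by $F^{i-1}$ (equivalently an orientation of each $F^i$: $(v_1,\dots,v_{i-1},x)$ is positive iff $(v_1,\dots,v_{i-1})$ is positive in $F^{i-1}$ and $x\in(F^i)^+$). For an oriented $k$-dimensional subspace $W$ ($0\le k\le n-1$) and complete oriented flag $F$, let $d$ be the unique integer $1\le d\le k+1$ with $F^{d-1}\subseteq W$, $F^d\not\subseteq W$; then $[W,F]$ is $W+F^d$ oriented by $(w_1,\dots,w_k,x)$ with $(w_1,\dots,w_k)$ a positive basis of $W$ and $x\in(F^d)^+$. Inductively, $[F_1]=F_1^1$ (with its orientation) and $[F_1,\dots,F_k]=[[F_1,\dots,F_{k-1}],F_k]$, an oriented $k$-dimensional subspace. For an oriented $n$-dimensional space $U$, $\mathrm{Or}(U)\in\{\pm1\}$ is the sign of its orientation relative to the canonical one of $\mathbb{R}^n$; for vectors, $\mathrm{Or}(v_1,\dots,v_n)=\operatorname{sign}\det(v_1,\dots,v_n)$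 (zero if not a basis). *)

From HB Require Import structures.
From mathcomp Require Import all_boot all_order all_algebra.
Set Implicit Arguments. Unset Strict Implicit. Unset Printing Implicit Defensive.
Import Order.TTheory GRing.Theory Num.Theory.
Local Open Scope ring_scope.

(* A complete oriented flag in R^n is encoded by an invertible n x n matrix F
   whose rows v_1, ..., v_n form an ordered basis: F^i = span(v_1..v_i) and
   (F^i)^+ is the open half-space of F^i (bounded by F^{i-1}) containing v_i.
   Every complete oriented flag arises this way. *)
Definition is_flag (R : fieldType) (n : nat) (F : 'M[R]_n) : bool :=
  F \in unitmx.

Definition mx_of_seq (R : fieldType) (n : nat) (s : seq 'rV[R]_n) : 'M[R]_n :=
  \matrix_(i < n) nth 0 s i.

(* An oriented k-dimensional subspace W is encoded by a positive basis s
   (a sequence of k vectors).  [W, F] is W + F^d oriented by (s, x) with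
   x in (F^d)^+, where d is least with F^d not contained in W; the vector
   v_d (row d-1 of F) is such an x.  So [W,F] is encoded by rcons s v_d. *)
Definition flag_step (R : fieldType) (n : nat) (s : seq 'rV[R]_n)
    (F : 'M[R]_n) : seq 'rV[R]_n :=
  let rs := [seq row i F | i <- enum 'I_n] in
  rcons s (nth 0 rs (find (fun v => ~~ (v <= mx_of_seq s)%MS) rs)).

(* [F_1, ..., F_k] = [[F_1, ..., F_{k-1}], F_k], with [F_1] = F_1^1
   (which equals [0, F_1] since d = 1 for W = {0}). *)
Definition flag_bracket (R : fieldType) (n : nat) (Fs : seq 'M[R]_n)
    : seq 'rV[R]_n :=
  foldl (@flag_step R n) [::] Fs.

Definition Or_vecs (R : realFieldType) (n : nat) (s : seq 'rV[R]_n) : R :=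
  Num.sg (\det (mx_of_seq s)).

Definition omit2 (T : Type) (m : nat) (a : 'I_m -> T) (i j : 'I_m) : seq T :=
  [seq a k | k <- enum 'I_m & (k != i) && (k != j)].

From mathcomp Require Import all_boot all_order all_algebra perm.

(* Encode the flag F_a by the rows v^a_1, ..., v^a_n of its matrix and put
   x_a := \sum_r t^(w_a r) v^a_r, with 0 < t <= 1 and weights w_a decreasing
   so fast in a that raising the row index at an earlier flag outweighs any
   change at later ones.  For n of the flags, multilinearity expands
   det(x_{a_1}, ..., x_{a_n}) over row selections f as
   \sum_f t^(\sum_k w_k f(k)) det(v^{a_k}_{f(k)})_k.  The bracket is the
   selection p in which p(k) is the first row of F_{a_k} outside the span of
   the rows chosen before.  A selection that first departs from p by taking an
   earlier row contains a dependent row, so its determinant vanishes; one that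
   first departs by taking a later row carries a strictly higher power of t.
   Hence det(x) = t^V (det [F_{a_1}, ..., F_{a_n}] + O(t)) has the sign of the
   bracket for small t, and one t serves the finitely many pairs (i, j). *)

Set Implicit Arguments. Unset Strict Implicit. Unset Printing Implicit Defensive.
Import Order.TTheory GRing.Theory Num.Theory.
Local Open Scope ring_scope.

Section FlagBracket.
Variables (R : fieldType) (n : nat).
Implicit Types (s : seq 'M[R]_n) (b : seq 'rV[R]_n).

Definition rows_of (M : 'M[R]_n) := [seq row i M | i <- enum 'I_n].

Lemma nth_rows_of (M : 'M[R]_n) (i : 'I_n) : nth 0 (rows_of M) i = row i M.
Proof.
rewrite /rows_of (nth_map i) ?size_enum_ord //; congr row.
by apply: val_inj; rewrite /= nth_enum_ord.
Qed.

Lemma row_mx_of_seq b (r : 'I_n) : row r (mx_of_seq b) = nth 0 b r.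
Proof. exact: rowK. Qed.

Lemma size_foldl_flag_step b s :
  size (foldl (@flag_step R n) b s) = (size b + size s)%N.
Proof.
elim: s b => [|M s IHs] b /=; first by rewrite addn0.
by rewrite IHs size_rcons addSnnS.
Qed.

Lemma foldl_flag_step_prefix b s : exists r, foldl (@flag_step R n) b s = b ++ r.
Proof.
elim: s b => [|M s IHs] b /=; first by exists [::]; rewrite cats0.
have [r ->] := IHs (flag_step b M).
by rewrite /flag_step -cats1 -catA; eexists.
Qed.

Lemma size_flag_bracket s : size (flag_bracket s) = size s.
Proof. exact: size_foldl_flag_step. Qed.

Lemma take_flag_bracket s k : (k <= size s)%N ->
  take k (flag_bracket s) = flag_bracket (take k s).
Proof.
move=> le_ks; rewrite -{1}(cat_take_drop k s) /flag_bracket foldl_cat.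
have [r ->] := foldl_flag_step_prefix (foldl (@flag_step R n) [::] (take k s)) (drop k s).
by rewrite take_size_cat // size_foldl_flag_step size_take_min (minn_idPl le_ks).
Qed.

Definition bracket_span s k : 'M[R]_n := mx_of_seq (take k (flag_bracket s)).

Lemma nth_flag_bracket s k : (k < size s)%N ->
  nth 0 (flag_bracket s) k =
  nth 0 (rows_of (nth 0 s k))
    (find (fun v => ~~ (v <= bracket_span s k)%MS) (rows_of (nth 0 s k))).
Proof.
move=> lt_ks; rewrite /bracket_span (take_flag_bracket (ltnW lt_ks)).
rewrite -(nth_take 0 (ltnSn k)) take_flag_bracket // (take_nth 0 lt_ks).
rewrite /flag_bracket foldl_rcons /flag_step nth_rcons.
by rewrite size_foldl_flag_step size_take lt_ks ltnn eqxx.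
Qed.

Lemma has_row_notin_bracket_span s (k : 'I_n) (M : 'M[R]_n) : M \in unitmx ->
  has (fun v => ~~ (v <= bracket_span s k)%MS) (rows_of M).
Proof.
move=> unitM; apply/negPn/negP => /hasPn all_in.
have M_sub : (M <= bracket_span s k)%MS.
  apply/row_subP => i; apply/negPn/all_in.
  by rewrite -nth_rows_of mem_nth // size_map size_enum_ord.
have not_free : ~~ row_free (bracket_span s k).
  apply/row_freePn; exists k.
  by rewrite row_mx_of_seq nth_default ?sub0mx // size_take_min geq_minl.
have := mxrankS M_sub; rewrite mxrank_unit // => n_le.
by move: not_free; rewrite /row_free eqn_leq rank_leq_row n_le.
Qed.

Lemma nth_flag_bracket_notin s (k : 'I_n) : (k < size s)%N ->
  nth 0 s k \in unitmx -> ~~ (nth 0 (flag_bracket s) k <= bracket_span s k)%MS.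
Proof.
move=> lt_ks unit_k; rewrite nth_flag_bracket //.
exact: (nth_find 0 (has_row_notin_bracket_span s k unit_k)).
Qed.

Lemma flag_bracket_pivot s (k : 'I_n) : (k < size s)%N -> nth 0 s k \in unitmx ->
  exists p : 'I_n, nth 0 (flag_bracket s) k = row p (nth 0 s k) /\
    forall i : 'I_n, (i < p)%N -> (row i (nth 0 s k) <= bracket_span s k)%MS.
Proof.
move=> lt_ks unit_k; have has_k := has_row_notin_bracket_span s k unit_k.
have := has_k; rewrite has_find size_map size_enum_ord => lt_pn.
exists (Ordinal lt_pn); split; first by rewrite nth_flag_bracket // -nth_rows_of.
move=> i lt_ip; rewrite -nth_rows_of; apply/negbFE.
exact: (before_find 0 lt_ip).
Qed.

Definition bracket_pivots s (p : 'I_n -> 'I_n) : Prop :=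
  forall k : 'I_n, nth 0 (flag_bracket s) k = row (p k) (nth 0 s k) /\
    forall i : 'I_n, (i < p k)%N -> (row i (nth 0 s k) <= bracket_span s k)%MS.

Lemma flag_bracket_pivots s :
  size s = n -> (forall k : 'I_n, nth 0 s k \in unitmx) ->
  exists p, bracket_pivots s p.
Proof.
move=> size_s unit_s; have lt_s (k : 'I_n) : (k < size s)%N by rewrite size_s.
exact: fin_all_exists (fun k => flag_bracket_pivot (lt_s k) (unit_s k)).
Qed.

Lemma rank_bracket_span s :
  size s = n -> (forall k : 'I_n, nth 0 s k \in unitmx) ->
  forall k, (k <= n)%N -> (k <= \rank (bracket_span s k))%N.
Proof.
move=> size_s unit_s; elim=> [|k IHk] lt_kn //.
have lt_ks : (k < size s)%N by rewrite size_s.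
have notin := nth_flag_bracket_notin (k := Ordinal lt_kn) lt_ks (unit_s _).
have span_lt : (bracket_span s k < bracket_span s k.+1)%MS.
  rewrite ltmxE; apply/andP; split.
    apply/row_subP => r; rewrite row_mx_of_seq.
    have [lt_rk|le_kr] := ltnP r k; last first.
      by rewrite nth_default ?sub0mx // size_take_min geq_min le_kr.
    rewrite nth_take // -(nth_take 0 (ltn_trans lt_rk (ltnSn k))).
    by rewrite -row_mx_of_seq row_sub.
  apply: contra notin => /(submx_trans (row_sub (Ordinal lt_kn) _)).
  by rewrite row_mx_of_seq nth_take.
exact: leq_ltn_trans (IHk (ltnW lt_kn)) (rank_ltmx span_lt).
Qed.

Lemma det_flag_bracket_neq0 s :
  size s = n -> (forall k : 'I_n, nth 0 s k \in unitmx) ->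
  \det (mx_of_seq (flag_bracket s)) != 0.
Proof.
move=> size_s unit_s; rewrite -unitfE -unitmxE -row_free_unit /row_free.
have := rank_bracket_span size_s unit_s (leqnn n).
by rewrite /bracket_span take_oversize ?size_flag_bracket ?size_s // eqn_leq rank_leq_row.
Qed.

Definition select_det s (f : 'I_n -> 'I_n) :=
  \det (\matrix_(k < n) row (f k) (nth 0 s k)).

Lemma select_det_below_pivot s (p f : 'I_n -> 'I_n) (k0 : 'I_n) :
  bracket_pivots s p -> (forall k : 'I_n, (k < k0)%N -> f k = p k) ->
  (f k0 < p k0)%N -> select_det s f = 0.
Proof.
move=> pivots agree below.
set M := \matrix_(k < n) row (f k) (nth 0 s k).
suff : ~~ row_free M by rewrite row_free_unit unitmxE unitfE negbK => /eqP.
apply/row_freePn; exists k0; rewrite rowK.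
apply: submx_trans (proj2 (pivots k0) _ below) _.
apply/row_subP => r; rewrite row_mx_of_seq.
have [lt_rk|le_kr] := ltnP r k0; last first.
  by rewrite nth_default ?sub0mx // size_take_min geq_min le_kr.
rewrite nth_take // (proj1 (pivots r)) -agree //.
have -> : row (f r) (nth 0 s r) = row r M by rewrite rowK.
case: (unliftP k0 r) => [r' ->|eq_r]; last by rewrite eq_r ltnn in lt_rk.
by rewrite row'Esub -row_rowsub row_sub.
Qed.

End FlagBracket.

Lemma sum_ord_split_at n (e : 'I_n -> nat) (k0 : 'I_n) :
  (\sum_k e k = \sum_(k : 'I_n | k < k0) e k + (e k0 + \sum_(k : 'I_n | k0 < k) e k))%N.
Proof.
rewrite (bigID (fun k : 'I_n => (k < k0)%N)) /=; congr (_ + _)%N.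
rewrite (bigD1 k0) /= ?ltnn //; congr (_ + _)%N.
apply: eq_bigl => k /=; rewrite -leqNgt ltn_neqAle andbC.
by congr (_ && _); rewrite eq_sym.
Qed.

Section DominantWeights.
Local Open Scope nat_scope.
Variables (n : nat) (w : 'I_n -> nat).
Hypothesis w_gt0 : forall k, 0 < w k.
Hypothesis w_dominant : forall k k' : 'I_n, k < k' -> n * n * w k' < w k.

Lemma dominant_weighted_sum_lt (f g : 'I_n -> 'I_n) (k0 : 'I_n) :
  (forall k : 'I_n, k < k0 -> f k = g k) -> g k0 < f k0 ->
  \sum_k w k * g k < \sum_k w k * f k.
Proof.
move=> agree lt_gf.
rewrite (sum_ord_split_at (fun k => w k * g k) k0).
rewrite (sum_ord_split_at (fun k => w k * f k) k0).
rewrite [X in _ < X + _](eq_bigr (fun k => w k * g k)) ?ltn_add2l => [|k /agree -> //].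
have n_gt0 : 0 < n by apply: leq_ltn_trans (ltn_ord k0).
(* Each [g k < n], so the terms beyond [k0] add up to less than [w k0]. *)
suff tail_lt : \sum_(k : 'I_n | k0 < k) w k * g k < w k0.
  apply: (@leq_trans (w k0 * f k0)); last exact: leq_addr.
  apply: (@leq_trans (w k0 * (g k0).+1)); last by rewrite leq_mul2l lt_gf orbT.
  by rewrite mulnS addnC ltn_add2r.
rewrite -(ltn_pmul2l n_gt0) big_distrr /=.
apply: (@leq_ltn_trans (\sum_(k : 'I_n | k0 < k) (w k0).-1)).
  apply: leq_sum => k lt_k0k; rewrite -ltnS prednK ?w_gt0 //.
  apply: leq_ltn_trans (w_dominant lt_k0k).
  by rewrite -mulnA leq_mul2l [X in _ <= X]mulnC leq_mul2l ltnW ?orbT.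
apply: (@leq_ltn_trans (\sum_k (w k0).-1)).
  by rewrite [X in _ <= X](bigID (fun k : 'I_n => k0 < k)) leq_addr.
rewrite sum_nat_const (_ : #|_| = n); last exact: card_ord.
by rewrite ltn_pmul2l // ltn_predL w_gt0.
Qed.

End DominantWeights.

Lemma det_scaled_row_sums (R : comNzRingType) n (G : 'I_n -> 'M[R]_n)
    (c : 'I_n -> 'I_n -> R) :
  \det (\matrix_(k < n) \sum_(i < n) c k i *: row i (G k)) =
  \sum_(f : {ffun 'I_n -> 'I_n})
     (\prod_k c k (f k)) * \det (\matrix_(k < n) row (f k) (G k)).
Proof.
have expand_prod (s : 'S_n) :
    \prod_k (\matrix_(k < n) \sum_(i < n) c k i *: row i (G k)) k (s k) =
    \sum_(f : {ffun 'I_n -> 'I_n}) (\prod_k c k (f k)) * \prod_k G k (f k) (s k).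
  under [RHS]eq_bigr => f _ do rewrite -big_split /=.
  rewrite -(bigA_distr_bigA (fun k i => c k i * G k i (s k))) /=.
  apply: eq_bigr => k _; rewrite !mxE summxE; apply: eq_bigr => i _.
  by rewrite !mxE.
rewrite /determinant; under eq_bigr => s _ do rewrite expand_prod big_distrr /=.
rewrite exchange_big /=; apply: eq_bigr => f _.
rewrite big_distrr /=; apply: eq_bigr => s _.
rewrite mulrCA; congr (_ * (_ * _)); apply: eq_bigr => k _.
by rewrite !mxE.
Qed.

Lemma sgr_eq_of_dist_lt (R : realDomainType) (x y : R) :
  `|x - y| < `|y| -> Num.sg x = Num.sg y.
Proof.
move=> dist_lt; case: (ltrgt0P y) => [y_gt0|y_lt0|y0].
- rewrite (gtr0_sg y_gt0) gtr0_sg //.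
  move: dist_lt; rewrite distrC => /(le_lt_trans (ler_norm _)).
  by rewrite gtr0_norm // ltrBlDr ltrDl.
- rewrite (ltr0_sg y_lt0) ltr0_sg //.
  move: dist_lt => /(le_lt_trans (ler_norm _)).
  by rewrite ltr0_norm // ltrBlDr addNr.
- by move: dist_lt; rewrite y0 normr0 normr_lt0.
Qed.

Definition select_det_mass (R : realFieldType) n (s : seq 'M[R]_n) : R :=
  \sum_(f : {ffun 'I_n -> 'I_n}) `|select_det s f|.

Lemma select_det_mass_ge0 (R : realFieldType) n (s : seq 'M[R]_n) :
  0 <= select_det_mass s.
Proof. by apply: sumr_ge0 => f _; exact: normr_ge0. Qed.

Section WeightedRows.
Variables (R : realFieldType) (n : nat) (s : seq 'M[R]_n).
Variables (w : 'I_n -> nat) (t : R).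
Hypothesis w_gt0 : forall k, (0 < w k)%N.
Hypothesis w_dominant : forall k k' : 'I_n, (k < k')%N -> (n * n * w k' < w k)%N.
Hypotheses (t_gt0 : 0 < t) (t_le1 : t <= 1).

Lemma off_pivot_term_le (p : 'I_n -> 'I_n) (f : {ffun 'I_n -> 'I_n}) :
  bracket_pivots s p -> f != [ffun k => p k] ->
  `|(\prod_k t ^+ (w k * f k)) * select_det s f|
    <= t ^+ (\sum_k w k * p k).+1 * `|select_det s f|.
Proof.
move=> pivots f_neq_p.
rewrite prodrXr normrM ger0_norm ?exprn_ge0 ?(ltW t_gt0) //.
have [->|det_neq0] := eqVneq (select_det s f) 0; first by rewrite normr0 !mulr0.
rewrite ler_pM2r ?normr_gt0 //; apply: (ler_wiXn2l (ltW t_gt0) t_le1).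
have /existsP[k1 neq_k1] : [exists k, f k != p k].
  apply: contraR f_neq_p => /existsPn eq_fp.
  by apply/eqP/ffunP => k; rewrite ffunE; apply/eqP; move: (eq_fp k); rewrite negbK.
case: (@arg_minnP _ k1 (fun k => f k != p k) (@nat_of_ord n) neq_k1).
move=> k0 neq_k0 min_k0.
have agree (k : 'I_n) : (k < k0)%N -> f k = p k.
  by move=> lt_kk0; apply/eqP; apply: contraTT lt_kk0 => /min_k0; rewrite -leqNgt.
case: (ltngtP (f k0) (p k0)) => [lt_fp|lt_pf|/val_inj eq_fp].
- by rewrite (select_det_below_pivot pivots agree lt_fp) eqxx in det_neq0.
- exact: dominant_weighted_sum_lt agree lt_pf.
- by rewrite eq_fp eqxx in neq_k0.
Qed.

Lemma sgr_det_weighted_rows :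
  size s = n -> (forall k : 'I_n, nth 0 s k \in unitmx) ->
  t * select_det_mass s < `|\det (mx_of_seq (flag_bracket s))| ->
  Num.sg (\det (\matrix_(k < n) \sum_(i < n) t ^+ (w k * i) *: row i (nth 0 s k)))
    = Num.sg (\det (mx_of_seq (flag_bracket s))).
Proof.
move=> size_s unit_s t_small.
have [p pivots] := flag_bracket_pivots size_s unit_s.
set fp := [ffun k => p k].
have bracket_det : \det (mx_of_seq (flag_bracket s)) = select_det s fp.
  congr (\det _); apply/row_matrixP => k.
  by rewrite row_mx_of_seq rowK ffunE (proj1 (pivots k)).
rewrite bracket_det in t_small *; rewrite det_scaled_row_sums (bigD1 fp) //=.
set V := (\sum_k w k * p k)%N.
have -> : \prod_k t ^+ (w k * fp k) = t ^+ V.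
  by rewrite prodrXr; congr (_ ^+ _); apply: eq_bigr => k _; rewrite ffunE.
set rest := \sum_(f | f != fp) _.
have rest_small : `|rest| <= t ^+ V.+1 * select_det_mass s.
  apply: le_trans (ler_norm_sum _ _ _) _.
  apply: le_trans (ler_sum _ (fun f => off_pivot_term_le pivots)) _.
  rewrite -big_distrr ler_wpM2l ?exprn_ge0 ?(ltW t_gt0) //.
  by rewrite /select_det_mass [X in _ <= X](bigD1 fp) //= lerDr normr_ge0.
have tV_gt0 : 0 < t ^+ V by rewrite exprn_gt0.
rewrite -[RHS](_ : Num.sg (t ^+ V * select_det s fp) = _); last first.
  by rewrite sgrM gtr0_sg // mul1r.
apply: sgr_eq_of_dist_lt; rewrite addrAC subrr add0r (le_lt_trans rest_small) //.
by rewrite normrM gtr0_norm // exprS -mulrA mulrCA ltr_pM2l.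
Qed.

End WeightedRows.

Definition omit2_index m (i j : 'I_m) := [seq k <- enum 'I_m | (k != i) && (k != j)].

Lemma size_omit2_index m (i j : 'I_m.+2) : i != j -> size (omit2_index i j) = m.
Proof.
move=> neq_ij; have := cardC [set i; j].
rewrite cards2 neq_ij card_ord add2n => /eq_add_S/eq_add_S card_m.
apply: etrans card_m; rewrite cardE /enum_mem /omit2_index enumT; congr size.
by apply: eq_filter => k; rewrite !inE negb_or.
Qed.

Lemma omit2_index_increasing m (i j : 'I_m) k k' :
  (k < k' < size (omit2_index i j))%N ->
  (nth i (omit2_index i j) k < nth i (omit2_index i j) k')%N.
Proof.
have sorted_idx : sorted (relpre val ltn) (omit2_index i j).
  apply: sorted_filter; first by move=> a b c; exact: ltn_trans.
  by rewrite -sorted_map val_enum_ord iota_ltn_sorted.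
case/andP=> lt_kk' lt_k's; apply: (sorted_ltn_nth _ i sorted_idx) => //.
- by move=> a b c; exact: ltn_trans.
- by rewrite inE (ltn_trans lt_kk').
Qed.

Lemma nth_omit2 T (x0 : T) m (a : 'I_m -> T) (i j : 'I_m) k :
  (k < size (omit2_index i j))%N -> nth x0 (omit2 a i j) k = a (nth i (omit2_index i j) k).
Proof. exact: nth_map. Qed.

Lemma exists_small_scale (R : realFieldType) (T : finType) (P : pred T)
    (C D : T -> R) :
  (forall x, 0 <= C x) -> (forall x, P x -> 0 < D x) ->
  exists2 t : R, 0 < t /\ t <= 1 & forall x, P x -> t * C x < D x.
Proof.
move=> C_ge0 D_gt0; set S := \sum_(x | P x) C x / D x.
have S_ge0 : 0 <= S by apply: sumr_ge0 => x /D_gt0 Dx; rewrite divr_ge0 ?(ltW Dx).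
have S1_gt0 : 0 < 1 + S by rewrite (lt_le_trans ltr01) // lerDl.
exists (1 + S)^-1; first by rewrite invr_gt0 invf_le1 // lerDl.
move=> x Px; have Dx := D_gt0 x Px.
have CD_le : C x / D x <= S.
  rewrite /S (bigD1 x) //= lerDl sumr_ge0 // => y /andP[/D_gt0 Dy _].
  by rewrite divr_ge0 ?(ltW Dy).
rewrite mulrC ltr_pdivrMr // mulrDr mulr1.
apply: (@le_lt_trans _ _ (D x * S)); last by rewrite ltrDr.
by rewrite -ler_pdivrMl // mulrC.
Qed.

Definition flag_weight n (a : 'I_n.+2) : nat := ((n * n).+1 ^ (n.+1 - a))%N.

Lemma flag_weight_dominant n (a b : 'I_n.+2) :
  (a < b)%N -> (n * n * flag_weight b < flag_weight a)%N.
Proof.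
move=> lt_ab; have le_b : (b <= n.+1)%N by rewrite -ltnS.
apply: (@leq_trans ((n * n).+1 ^ (n.+1 - b).+1)).
  by rewrite expnSr mulnS mulnC -[X in (X < _)%N]add0n ltn_add2r expn_gt0.
by rewrite leq_pexp2l // -subSn // -[(n.+1 - a)%N]subSS leq_sub2l.
Qed.

Section OmitTwoFlags.
Variables (R : realFieldType) (n : nat) (F : 'I_n.+2 -> 'M[R]_n) (i j : 'I_n.+2).
Hypotheses (F_unit : forall a, F a \in unitmx) (neq_ij : i != j).

Lemma size_omit2_flags : size (omit2 F i j) = n.
Proof. by rewrite size_map size_omit2_index. Qed.

Lemma det_omit2_bracket_neq0 : \det (mx_of_seq (flag_bracket (omit2 F i j))) != 0.
Proof.
apply: det_flag_bracket_neq0 size_omit2_flags _ => k.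
by rewrite nth_omit2 ?size_omit2_index.
Qed.

Lemma Or_omit2_weighted_rows (w : 'I_n.+2 -> nat) (t : R) :
  (forall a, 0 < w a)%N -> (forall a b : 'I_n.+2, a < b -> n * n * w b < w a)%N ->
  0 < t -> t <= 1 ->
  t * select_det_mass (omit2 F i j)
    < `|\det (mx_of_seq (flag_bracket (omit2 F i j)))| ->
  Or_vecs (flag_bracket (omit2 F i j))
    = Or_vecs (omit2 (fun a => \sum_(r < n) t ^+ (w a * r) *: row r (F a)) i j).
Proof.
move=> w_gt0 w_dominant t_gt0 t_le1 t_small.
have size_idx := size_omit2_index neq_ij.
rewrite /Or_vecs -(sgr_det_weighted_rows (w := fun k : 'I_n => w (nth i (omit2_index i j) k))
  _ _ t_gt0 t_le1 size_omit2_flags _ t_small).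
- congr (Num.sg (\det _)); apply/row_matrixP => k.
  by rewrite row_mx_of_seq rowK !nth_omit2 ?size_idx.
- by move=> k.
- move=> k k' lt_kk'; apply/w_dominant/omit2_index_increasing.
  by rewrite lt_kk' size_idx /=.
- by move=> k; rewrite nth_omit2 ?size_idx.
Qed.

End OmitTwoFlags.

Theorem proposition4p4 (R : rcfType) (n : nat)
    (F : 'I_n.+2 -> 'M[R]_n) (hF : forall k, is_flag (F k)) :
  exists x : 'I_n.+2 -> 'rV[R]_n,
    forall i j : 'I_n.+2, (i < j)%N ->
      Or_vecs (flag_bracket (omit2 F i j)) = Or_vecs (omit2 x i j).
Proof.
pose C (ij : 'I_n.+2 * 'I_n.+2) := select_det_mass (omit2 F ij.1 ij.2).
pose D (ij : 'I_n.+2 * 'I_n.+2) :=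
  `|\det (mx_of_seq (flag_bracket (omit2 F ij.1 ij.2)))|.
have D_gt0 (ij : 'I_n.+2 * 'I_n.+2) : (ij.1 < ij.2)%N -> 0 < D ij.
  by move=> lt_ij; rewrite normr_gt0 det_omit2_bracket_neq0 // neq_ltn lt_ij.
have [t [t_gt0 t_le1] t_small] := exists_small_scale
  (P := fun ij : 'I_n.+2 * 'I_n.+2 => (ij.1 < ij.2)%N) (C := C) (fun _ => select_det_mass_ge0 _) D_gt0.
exists (fun a => \sum_(r < n) t ^+ (flag_weight a * r) *: row r (F a)) => i j lt_ij.
apply: Or_omit2_weighted_rows (t_small (i, j) lt_ij) => //.
- by rewrite neq_ltn lt_ij.
- by move=> a; rewrite expn_gt0.
- exact: flag_weight_dominant.
Qed.
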